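(* Let $\mathcal{S}\subseteq\mathbb{Q}[x_1,\dots,x_n]$ and let $m\ge1$ be an integer. Set $\mathcal{S}^m=\{P(x_1^m,\dots,x_n^m)\ :\ P\in\mathcal{S}\}$, and for a set $\mathcal{T}$ of polynomials write $\mathcal{T}^m$ likewise. Let $G(I)$ denote the unique reduced monic Gröbner basis of an ideal $I$ with respect to the lexicographic monomial order ($x^\nu>x^\mu$ iff the first non-zero entry of $\nu-\mu$ is positive). Then $$G(\langle\mathcal{S}^m\rangle)=G(\langle\mathcal{S}\rangle)^m,$$ where $\langle\cdot\rangle$ denotes the ideal generated. *)

From HB Require Import structures.
From mathcomp Require Import all_boot all_order all_algebra.
From mathcomp Require Import mpoly.
Set Implicit Arguments. Unset Strict Implicit. Unset Printing Implicit Defensive.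
Import Order.TTheory GRing.Theory Num.Theory.
Local Open Scope ring_scope.

Section GB.
Variable n : nat.
Local Notation P := {mpoly rat[n]}.
Local Notation M := 'X_{1..n}.

Definition lex_lt (a b : M) : bool :=
  [exists i : 'I_n, [forall j : 'I_n, (j < i)%N ==> (a j == b j)] && (a i < b i)%N].

Definition mdiv (a b : M) : bool := [forall i : 'I_n, (a i <= b i)%N].

Definition is_lm (p : P) (a : M) : Prop :=
  a \in msupp p /\ forall b, b \in msupp p -> b != a -> lex_lt b a.

Definition ideal_gen (S : P -> Prop) : P -> Prop :=
  fun p => exists s : seq (P * P),
    (forall x, x \in s -> S x.2) /\ p = \sum_(x <- s) x.1 * x.2.

Definition is_groebner (I : P -> Prop) (G : seq P) : Prop :=
  (forall g, g \in G -> I g) /\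
  (forall f, I f -> f != 0 -> forall a, is_lm f a ->
     exists2 g, g \in G & exists2 b, is_lm g b & mdiv b a).

Definition is_reduced_groebner (I : P -> Prop) (G : seq P) : Prop :=
  is_groebner I G /\
  (forall g, g \in G -> exists2 a, is_lm g a & g@_a = 1) /\
  (forall g g', g \in G -> g' \in G -> g != g' ->
     forall a, is_lm g' a -> forall b, b \in msupp g -> ~~ mdiv a b).

Definition powm (m : nat) (p : P) : P :=
  comp_mpoly [tuple ('X_i : P) ^+ m | i < n] p.

Definition set_powm (m : nat) (S : P -> Prop) : P -> Prop :=
  fun q => exists2 p, S p & q = powm m p.

End GB.

From HB Require Import structures.
From mathcomp Require Import all_boot all_order all_algebra.
From mathcomp Require Import mpoly.
From mathcomp Require Import zify.
Set Implicit Arguments. Unset Strict Implicit. Unset Printing Implicit Defensive.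
Import Order.TTheory GRing.Theory Num.Theory.
Local Open Scope ring_scope.

(* Write [a = q m + r] coordinatewise with [0 <= r < m].  Keeping the terms
   of f whose exponents are congruent to [a] modulo [m], and dividing these
   exponents by [m], is a linear map [rho_a] with
   [rho_a (h P(x^m)) = rho_a(h) P]; hence it maps <S^m> into <S>.  As
   [c |-> c m + r] preserves the lex order, if x^a leads f then x^q leads
   [rho_a f].  So for f in <S^m> with leading monomial x^a, some g in G(<S>)
   has a leading monomial dividing x^q, and then g(x^m) lies in <S^m> with a
   leading monomial dividing x^a: G(<S>)^m is a Groebner basis of <S^m>.  It
   is clearly monic and reduced, and a reduced monic Groebner basis is
   unique. *)

Section Lex.
Variable n : nat.
Implicit Types a b c : 'X_{1..n}.

Lemma lex_ltP a b : reflect (exists i : 'I_n,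
   (forall j : 'I_n, (j < i)%N -> a j = b j) /\ (a i < b i)%N) (lex_lt a b).
Proof.
apply: (iffP existsP) => [[i /andP[/forallP eq_lt lt_i]]|[i [eq_lt lt_i]]].
  by exists i; split => // j lt_ji; apply/eqP/(implyP (eq_lt j)).
exists i; rewrite lt_i andbT; apply/forallP => j; apply/implyP => lt_ji.
by rewrite eq_lt.
Qed.

Lemma lex_ltxx a : ~~ lex_lt a a.
Proof. by apply/lex_ltP => -[i [_]]; rewrite ltnn. Qed.

Lemma lex_lt_trans a b c : lex_lt a b -> lex_lt b c -> lex_lt a c.
Proof.
move=> /lex_ltP[i [eq_ab lt_ab]] /lex_ltP[j [eq_bc lt_bc]]; apply/lex_ltP.
have [lt_ij|le_ji] := ltnP i j.
  exists i; split => [k lt_ki|]; first by rewrite eq_ab ?eq_bc //; lia.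
  by rewrite -(eq_bc i lt_ij).
exists j; split => [k lt_kj|]; first by rewrite eq_ab ?eq_bc //; lia.
suff : (a j <= b j)%N by lia.
case: (ltngtP j i) le_ji => // [lt_ji _|/val_inj -> _]; first by rewrite eq_ab.
exact: ltnW.
Qed.

Lemma lex_lt_total a b : a != b -> lex_lt a b || lex_lt b a.
Proof.
move=> neq_ab.
have [i0 neq_i0] : exists i : 'I_n, a i != b i.
  apply/existsP; apply: contraR neq_ab => /existsPn eq_ab; apply/eqP/mnmP => i.
  by apply/eqP; move: (eq_ab i); rewrite negbK.
have [k neq_k min_k] := @arg_minnP _ i0 (fun i => a i != b i) val neq_i0.
have eq_lt_k (j : 'I_n) : (j < k)%N -> a j = b j.
  by move=> lt_jk; apply/eqP; apply: contraTT lt_jk => /min_k; rewrite -leqNgt.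
case: (ltngtP (a k) (b k)) neq_k => // lt_k _; apply/orP.
  by left; apply/lex_ltP; exists k.
by right; apply/lex_ltP; exists k; split => // j /eq_lt_k.
Qed.

Lemma eq_lex_lt a b a' b' :
  (forall i, (a' i == b' i) = (a i == b i)) ->
  (forall i, (a' i < b' i)%N = (a i < b i)%N) ->
  lex_lt a' b' = lex_lt a b.
Proof.
move=> eqE ltE; apply/lex_ltP/lex_ltP => -[i [eq_lt lt_i]]; exists i; split.
- by move=> j /eq_lt /eqP; rewrite eqE => /eqP.
- by rewrite -ltE.
- by move=> j /eq_lt /eqP; rewrite -eqE => /eqP.
- by rewrite ltE.
Qed.

Lemma lex_lt_addr a b c : lex_lt (a + c)%MM (b + c)%MM = lex_lt a b.
Proof. by apply: eq_lex_lt => i; rewrite !mnmDE ?eqn_add2r ?ltn_add2r. Qed.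

Lemma lex_lt_max_seq (s : seq 'X_{1..n}) : s != [::] ->
  exists2 a, a \in s & forall b, b \in s -> b != a -> lex_lt b a.
Proof.
elim: s => // x s IHs _; have [->|/IHs[a a_s max_a]] := eqVneq s [::].
  by exists x; rewrite ?mem_seq1 // => b; rewrite mem_seq1 => ->.
have [->|neq_xa] := eqVneq x a.
  by exists a => [|b]; rewrite ?mem_head // in_cons => /predU1P[-> /eqP|/max_a].
have [lt_xa|lt_ax] := orP (lex_lt_total neq_xa).
  by exists a => [|b]; rewrite in_cons ?a_s ?orbT // => /predU1P[-> _|/max_a].
exists x => [|b]; first exact: mem_head.
rewrite in_cons => /predU1P[->|b_s]; first by rewrite eqxx.
have [-> //|neq_ba _] := eqVneq b a.
exact: lex_lt_trans (max_a b b_s neq_ba) lt_ax.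
Qed.

Lemma mdivP a b : reflect (forall i, (a i <= b i)%N) (mdiv a b).
Proof. exact: (iffP forallP). Qed.

Lemma mdiv_trans a b c : mdiv a b -> mdiv b c -> mdiv a c.
Proof.
move=> /mdivP le_ab /mdivP le_bc; apply/mdivP => i.
exact: leq_trans (le_ab i) (le_bc i).
Qed.

Lemma mdiv_anti a b : mdiv a b -> mdiv b a -> a = b.
Proof.
move=> /mdivP le_ab /mdivP le_ba; apply/mnmP => i.
by apply/eqP; rewrite eqn_leq le_ab le_ba.
Qed.

Lemma mdiv_lex_ge a b : mdiv b a -> ~~ lex_lt a b.
Proof.
by move=> /mdivP le_ba; apply/lex_ltP => -[i [_]]; move: (le_ba i); lia.
Qed.

End Lex.

Section LeadingMonomial.
Variable n : nat.
Implicit Types p : {mpoly rat[n]}.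

Lemma is_lm_uniq p a b : is_lm p a -> is_lm p b -> a = b.
Proof.
move=> [a_p max_a] [b_p max_b]; apply/eqP/negPn/negP => neq_ab.
have neq_ba : b != a by rewrite eq_sym.
have := lex_lt_trans (max_a b b_p neq_ba) (max_b a a_p neq_ab).
by rewrite (negbTE (lex_ltxx _)).
Qed.

Lemma is_lm_exists p : p != 0 -> exists a, is_lm p a.
Proof.
rewrite -msupp_eq0 => /lex_lt_max_seq[a a_p max_a].
by exists a; split.
Qed.

End LeadingMonomial.

Section Support.
Variables (n : nat) (R : ringType).
Implicit Types (f : {mpoly R[n]}) (w : 'X_{1..n} -> {mpoly R[n]}).

Lemma msupp_neq0 f a : a \in msupp f -> f != 0.
Proof. by apply: contraTneq => ->; rewrite msupp0. Qed.

Lemma mcoeff_lincomb f w e a :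
  (forall b, b \in msupp f -> (w b)@_e = (b == a)%:R) ->
  (\sum_(b <- msupp f) f@_b *: w b)@_e = f@_a.
Proof.
move=> w_e; rewrite [in RHS](mpolyE f) !linear_sum /=.
apply: eq_big_seq => b b_f.
by rewrite !mcoeffZ w_e // mcoeffX.
Qed.

Lemma msupp_lincomb f w d : d \in msupp (\sum_(b <- msupp f) f@_b *: w b) ->
  exists2 b, b \in msupp f & d \in msupp (w b).
Proof.
move/msupp_sum_le/flattenP => [_ /mapP[b b_f ->] d_b].
by exists b; [move: b_f; rewrite mem_filter => /andP[] | exact: msuppZ_le d_b].
Qed.

End Support.

Section Powers.
Variables (n m : nat).
Hypothesis m_gt0 : (0 < m)%N.
Local Notation P := {mpoly rat[n]}.
Implicit Types (a b c d : 'X_{1..n}) (p : P).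

Lemma powmX a : powm m ('X_[a] : P) = 'X_[(a *+ m)%MM].
Proof.
rewrite /powm comp_mpolyX mpolyXE_id; apply: eq_bigr => i _.
by rewrite tnth_mktuple mulmnE -exprM mulnC.
Qed.

Lemma powmE p : powm m p = \sum_(a <- msupp p) p@_a *: 'X_[(a *+ m)%MM].
Proof.
rewrite /powm comp_mpolyEX; apply: eq_bigr => a _.
by congr (_ *: _); apply: powmX.
Qed.

Lemma mulmn_inj : injective (fun a : 'X_{1..n} => (a *+ m)%MM).
Proof.
move=> a b /mnmP eq_ab; apply/mnmP => i.
by apply/eqP; rewrite -(eqn_pmul2r m_gt0) -!mulmnE eq_ab.
Qed.

Lemma mcoeff_powm p c : (powm m p)@_(c *+ m)%MM = p@_c.
Proof.
rewrite powmE; apply: mcoeff_lincomb => b _.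
by rewrite mcoeffX (inj_eq mulmn_inj).
Qed.

Lemma msupp_powm p d : d \in msupp (powm m p) ->
  exists2 c, c \in msupp p & d = (c *+ m)%MM.
Proof.
rewrite powmE => /msupp_lincomb[b b_p]; rewrite msuppX mem_seq1 => /eqP ->.
by exists b.
Qed.

Lemma lex_lt_mulmn a b : lex_lt (a *+ m)%MM (b *+ m)%MM = lex_lt a b.
Proof. by apply: eq_lex_lt => i; rewrite !mulmnE ?eqn_pmul2r ?ltn_pmul2r. Qed.

Lemma mdiv_mulmn a b : mdiv (a *+ m)%MM (b *+ m)%MM = mdiv a b.
Proof.
by apply/mdivP/mdivP => le_ab i; move: (le_ab i); rewrite !mulmnE leq_pmul2r.
Qed.

Lemma is_lm_powm p a : is_lm p a -> is_lm (powm m p) (a *+ m)%MM.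
Proof.
move=> [a_p max_a]; split.
  by rewrite mcoeff_msupp mcoeff_powm -mcoeff_msupp.
move=> _ /msupp_powm[c c_p ->] neq_ca; rewrite lex_lt_mulmn.
by apply: max_a => //; apply: contraNneq neq_ca => ->.
Qed.

End Powers.

Section ResidueQuotient.
Variables (n m : nat).
Hypothesis m_gt0 : (0 < m)%N.
Local Notation P := {mpoly rat[n]}.
Implicit Types (a b c d e : 'X_{1..n}) (f h s : P).

Definition mquo b : 'X_{1..n} := [multinom (b i %/ m)%N | i < n].
Definition mrem b : 'X_{1..n} := [multinom (b i %% m)%N | i < n].

Lemma mquo_mrem b : b = (mquo b *+ m + mrem b)%MM.
Proof. by apply/mnmP => i; rewrite mnmDE mulmnE !mnmE -divn_eq. Qed.

Lemma mquo_mulmnD c b : mquo (c *+ m + b)%MM = (c + mquo b)%MM.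
Proof. by apply/mnmP => i; rewrite !(mnmE, mnmDE, mulmnE) divnMDl. Qed.

Lemma mrem_mulmnD c b : mrem (c *+ m + b)%MM = mrem b.
Proof. by apply/mnmP => i; rewrite !(mnmE, mnmDE, mulmnE) modnMDl. Qed.

Lemma mquo_mrem0 a : mquo (mrem a) = 0%MM.
Proof. by apply/mnmP => i; rewrite !mnmE divn_small // ltn_pmod. Qed.

Lemma mrem_id a : mrem (mrem a) = mrem a.
Proof. by apply/mnmP => i; rewrite !mnmE modn_mod. Qed.

(* The map rho_a of the header; only the residue [mrem a] of [a] matters. *)
Definition res_term a b : P := if mrem b == mrem a then 'X_[mquo b] else 0.
Definition res_quo a f : P := \sum_(b <- msupp f) f@_b *: res_term a b.

Lemma mcoeff_res_term a b c :
  (res_term a b)@_c = (b == c *+ m + mrem a)%MM%:R.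
Proof.
rewrite /res_term; have [eq_r|neq_r] := eqVneq (mrem b) (mrem a).
  rewrite mcoeffX; congr (nat_of_bool _)%:R.
  apply/eqP/eqP => [<-|->]; first by rewrite {1}(mquo_mrem b) eq_r.
  by rewrite mquo_mulmnD mquo_mrem0 addm0.
rewrite mcoeff0; case: eqP => // eq_b; move: neq_r.
by rewrite eq_b mrem_mulmnD mrem_id eqxx.
Qed.

Lemma mcoeff_res_quo a f c : (res_quo a f)@_c = f@_(c *+ m + mrem a)%MM.
Proof. by apply: mcoeff_lincomb => b _; apply: mcoeff_res_term. Qed.

Lemma res_quo_is_linear a : linear (res_quo a).
Proof.
move=> k f g; apply/mpolyP => c.
by rewrite mcoeffD mcoeffZ !mcoeff_res_quo mcoeffD mcoeffZ.
Qed.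

HB.instance Definition _ a :=
  GRing.isLinear.Build rat P P _ (res_quo a) (res_quo_is_linear a).

Lemma res_quoX a b : res_quo a 'X_[b] = res_term a b.
Proof. by rewrite /res_quo msuppX big_seq1 mcoeffX eqxx scale1r. Qed.

Lemma res_term_mulmnD a b d :
  res_term a (b + d *+ m)%MM = res_term a b * 'X_[d].
Proof.
rewrite /res_term addmC mrem_mulmnD mquo_mulmnD.
by case: ifP => _; rewrite ?mul0r // addmC mpolyXD.
Qed.

Lemma res_quo_mulX_powm a b s :
  res_quo a ('X_[b] * powm m s) = res_term a b * s.
Proof.
rewrite powmE mulr_sumr linear_sum [in RHS](mpolyE s) mulr_sumr.
apply: eq_bigr => d _.
by rewrite -scalerAr linearZ /= -scalerAr -mpolyXD res_quoX res_term_mulmnD.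
Qed.

Lemma res_quoM_powm a h s : res_quo a (h * powm m s) = res_quo a h * s.
Proof.
rewrite {1}(mpolyE h) mulr_suml linear_sum /res_quo mulr_suml.
apply: eq_bigr => b _.
by rewrite -scalerAl linearZ /= res_quo_mulX_powm -scalerAl.
Qed.

Lemma ideal_gen_res_quo a (S : P -> Prop) f :
  ideal_gen (set_powm m S) f -> ideal_gen S (res_quo a f).
Proof.
case=> t [t_S ->]; elim: t t_S => [|x t IHt] t_S.
  by exists [::]; split => //; rewrite !big_nil raddf0.
have [p S_p x_p] := t_S x (mem_head _ _).
have [t' [t'_S t'_sum]] : ideal_gen S (res_quo a (\sum_(y <- t) y.1 * y.2)).
  by apply: IHt => y y_t; apply: t_S; rewrite in_cons y_t orbT.
exists ((res_quo a x.1, p) :: t'); split.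
  by move=> y; rewrite in_cons => /predU1P[->|/t'_S].
by rewrite !big_cons raddfD /= x_p res_quoM_powm t'_sum.
Qed.

Lemma is_lm_res_quo f a : is_lm f a -> is_lm (res_quo a f) (mquo a).
Proof.
move=> [a_f max_a]; split.
  by rewrite mcoeff_msupp mcoeff_res_quo -mquo_mrem -mcoeff_msupp.
move=> c; rewrite mcoeff_msupp mcoeff_res_quo -mcoeff_msupp => c_f neq_c.
have neq_ca : (c *+ m + mrem a)%MM != a.
  by apply: contraNneq neq_c => <-; rewrite mquo_mulmnD mquo_mrem0 addm0.
have := max_a _ c_f neq_ca.
by rewrite {2}(mquo_mrem a) lex_lt_addr lex_lt_mulmn.
Qed.

Lemma mdiv_mulmn_mquo e a : mdiv e (mquo a) -> mdiv (e *+ m)%MM a.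
Proof.
move=> /mdivP le_e; apply/mdivP => i; rewrite mulmnE.
apply: leq_trans (leq_trunc_div (a i) m); rewrite leq_pmul2r //.
by move: (le_e i); rewrite mnmE.
Qed.

End ResidueQuotient.

Section Ideals.
Variable n : nat.
Local Notation P := {mpoly rat[n]}.
Implicit Types (S : P -> Prop) (p q : P).

Lemma ideal_genB S p q : ideal_gen S p -> ideal_gen S q -> ideal_gen S (p - q).
Proof.
case=> s [s_S ->] [t [t_S ->]].
exists (s ++ [seq (- x.1, x.2) | x <- t]); split.
  by move=> y; rewrite mem_cat => /orP[/s_S|/mapP[x /t_S x_S ->]].
rewrite big_cat big_map -sumrN; congr (_ + _).
by apply: eq_bigr => x _; rewrite mulNr.
Qed.

Lemma ideal_gen_powm m S p :
  ideal_gen S p -> ideal_gen (set_powm m S) (powm m p).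
Proof.
case=> s [s_S ->]; exists [seq (powm m x.1, powm m x.2) | x <- s]; split.
  by move=> _ /mapP[x /s_S x_S ->]; exists x.2.
by rewrite big_map /powm rmorph_sum; apply: eq_bigr => x _; rewrite rmorphM.
Qed.

End Ideals.

Section ReducedGroebnerUnique.
Variables (n : nat) (I : {mpoly rat[n]} -> Prop).
Hypothesis I_sub : forall p q, I p -> I q -> I (p - q).

Lemma reduced_groebner_lm_supp G g a h e :
  is_reduced_groebner I G -> g \in G -> is_lm g a ->
  I h -> h != 0 -> is_lm h e -> e \in msupp g -> e = a.
Proof.
move=> [[_ lmG] [_ redG]] g_G lm_g I_h h_neq0 lm_h e_g.
have [k k_G [b lm_k b_e]] := lmG h I_h h_neq0 e lm_h.
have [eq_gk|neq_gk] := eqVneq g k; last first.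
  by move: (redG g k g_G k_G neq_gk b lm_k e e_g); rewrite b_e.
subst k; have eq_ba := is_lm_uniq lm_k lm_g; subst b.
apply/eqP/negPn/negP => neq_eb.
by move: (mdiv_lex_ge b_e); rewrite (lm_g.2 e e_g neq_eb).
Qed.

Lemma reduced_groebner_subset G G' :
  is_reduced_groebner I G -> is_reduced_groebner I G' -> {subset G' <= G}.
Proof.
move=> RG RG' g' g'_G'.
have [a lm_g' g'_a] := RG'.2.1 g' g'_G'.
have I_g' := RG'.1.1 g' g'_G'.
have [g g_G [b lm_g b_a]] := RG.1.2 g' I_g' (msupp_neq0 lm_g'.1) a lm_g'.
have I_g := RG.1.1 g g_G.
have [g'' g''_G' [c lm_g'' c_b]] := RG'.1.2 g I_g (msupp_neq0 lm_g.1) b lm_g.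
have eq_g'' : g'' = g'.
  apply/eqP/negPn/negP => neq_g''; have neq_g' : g' != g'' by rewrite eq_sym.
  have := RG'.2.2 g' g'' g'_G' g''_G' neq_g' c lm_g'' a lm_g'.1.
  by rewrite (mdiv_trans c_b b_a).
subst g''; have eq_ca := is_lm_uniq lm_g'' lm_g'; subst c.
have eq_ba := mdiv_anti b_a c_b; subst b.
have [a' lm_ga' g_a] := RG.2.1 g g_G.
have eq_a' := is_lm_uniq lm_ga' lm_g; subst a'.
have [<- //|neq_gg'] := eqVneq g g'.
have I_gg' := I_sub I_g I_g'.
have gg'_neq0 : g - g' != 0 by rewrite subr_eq0.
have [e lm_e] := is_lm_exists gg'_neq0.
have neq_ea : e != a.
  apply: contraTneq lm_e.1 => ->.
  by rewrite mcoeff_msupp mcoeffB g_a g'_a subrr eqxx.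
case/eqP: neq_ea; have := msuppB_le lm_e.1; rewrite mem_cat => /orP[e_g|e_g'].
- exact: reduced_groebner_lm_supp RG g_G lm_g I_gg' gg'_neq0 lm_e e_g.
- exact: reduced_groebner_lm_supp RG' g'_G' lm_g' I_gg' gg'_neq0 lm_e e_g'.
Qed.

Lemma reduced_groebner_unique G G' :
  is_reduced_groebner I G -> is_reduced_groebner I G' -> G =i G'.
Proof.
move=> RG RG' g; apply/idP/idP; exact: reduced_groebner_subset.
Qed.

End ReducedGroebnerUnique.

Lemma reduced_groebner_powm n m (S : {mpoly rat[n]} -> Prop) G : (0 < m)%N ->
  is_reduced_groebner (ideal_gen S) G ->
  is_reduced_groebner (ideal_gen (set_powm m S)) (map (powm m) G).
Proof.
move=> m_gt0 [[G_S lmG] [monicG redG]]; split; [split|split].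
- by move=> _ /mapP[g g_G ->]; apply/ideal_gen_powm/G_S.
- move=> f I_f _ a lm_f.
  have lm_q := is_lm_res_quo m_gt0 lm_f.
  have [g g_G [e lm_g e_q]] :=
    lmG _ (ideal_gen_res_quo m_gt0 a I_f) (msupp_neq0 lm_q.1) _ lm_q.
  exists (powm m g); first exact: map_f.
  by exists (e *+ m)%MM; [apply: is_lm_powm | apply: mdiv_mulmn_mquo].
- move=> _ /mapP[g g_G ->]; have [a lm_g g_a] := monicG g g_G.
  by exists (a *+ m)%MM; [apply: is_lm_powm | rewrite mcoeff_powm].
- move=> _ _ /mapP[g g_G ->] /mapP[g' g'_G ->] neq_g a lm_g'.
  move=> _ /msupp_powm[c c_g ->].
  have neq_gg' : g != g' by apply: contraNneq neq_g => ->.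
  have [a' lm_ga' _] := monicG g' g'_G.
  rewrite (is_lm_uniq lm_g' (is_lm_powm m_gt0 lm_ga')) mdiv_mulmn //.
  exact: redG g g' g_G g'_G neq_gg' a' lm_ga' c c_g.
Qed.

Theorem mainTheorem4 (n : nat) (S : {mpoly rat[n]} -> Prop) (m : nat)
    (hm : (1 <= m)%N) (G : seq {mpoly rat[n]}) :
  is_reduced_groebner (ideal_gen S) G ->
  is_reduced_groebner (ideal_gen (set_powm m S)) (map (powm m) G) /\
  (forall G', is_reduced_groebner (ideal_gen (set_powm m S)) G' ->
     G' =i map (powm m) G).
Proof.
move=> RG; have RGm := reduced_groebner_powm hm RG.
split=> // G' RG'; apply: reduced_groebner_unique RG' RGm.
exact: ideal_genB.
Qed.
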